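(* For every real $x$ and every natural number $n$, \[0 < \mathrm{LB}_{\exp}(x,n) \le \exp(x) \le \mathrm{UB}_{\exp}(x,n).\]
   Context: For $-1 \le x < 0$ and natural $n$: \[\mathrm{LB}_{\exp}(x,n) = \sum_{i=0}^{2(n+1)+1}\frac{x^i}{i!},\qquad \mathrm{UB}_{\exp}(x,n) = \sum_{i=0}^{2(n+1)}\frac{x^i}{i!}.\] Further: $\mathrm{LB}_{\exp}(0,n)=\mathrm{UB}_{\exp}(0,n)=1$; for $x<-1$, with $k = -\lfloor x\rfloor$: $\mathrm{LB}_{\exp}(x,n) = \left(\mathrm{LB}_{\exp}(x/k,n)\right)^{k}$ and $\mathrm{UB}_{\exp}(x,n) = \left(\mathrm{UB}_{\exp}(x/k,n)\right)^{k}$; for $x>0$: $\mathrm{LB}_{\exp}(x,n) = 1/\mathrm{UB}_{\exp}(-x,n)$ and $\mathrm{UB}_{\exp}(x,n) = 1/\mathrm{LB}_{\exp}(-x,n)$. *)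

From Stdlib Require Import Reals Factorial.
Open Scope R_scope.

(* Truncated Taylor polynomial sum_{i=0}^{N} x^i / i!  (sum_f_R0 f N has N+1 terms). *)
Definition taylor_exp (x : R) (N : nat) : R :=
  sum_f_R0 (fun i => x ^ i / INR (fact i)) N.

Definition lb_base (x : R) (n : nat) : R := taylor_exp x (2 * (n + 1) + 1).
Definition ub_base (x : R) (n : nat) : R := taylor_exp x (2 * (n + 1)).

(* k = - floor x  (Int_part is the floor function). *)
Definition kfl (x : R) : nat := Z.to_nat (- Int_part x).

Definition LB_exp_nonpos (x : R) (n : nat) : R :=
  if Rle_dec (-1) x then lb_base x n
  else (lb_base (x / INR (kfl x)) n) ^ (kfl x).
Definition UB_exp_nonpos (x : R) (n : nat) : R :=
  if Rle_dec (-1) x then ub_base x n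
  else (ub_base (x / INR (kfl x)) n) ^ (kfl x).

Definition LB_exp (x : R) (n : nat) : R :=
  if Req_EM_T x 0 then 1
  else if Rlt_dec x 0 then LB_exp_nonpos x n
  else / UB_exp_nonpos (- x) n.

Definition UB_exp (x : R) (n : nat) : R :=
  if Req_EM_T x 0 then 1
  else if Rlt_dec x 0 then UB_exp_nonpos x n
  else / LB_exp_nonpos (- x) n.

(* On [-1, 0] the Taylor series of exp at y is alternating with decreasing
   terms (-y)^i / i!, so its odd partial sums lie below exp y and its even
   partial sums above; the odd sums also increase, hence stay above the
   third one, which is positive.  Below -1, exp x = (exp (x/k))^k with
   x/k in [-1, 0), and the bounds survive the k-th power since they are
   nonnegative.  Above 0, exp x = 1 / exp (-x) swaps the two bounds. *)

From Stdlib Require Import Reals.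
From Stdlib Require Import Lra Lia ZArith.
Open Scope R_scope.

Lemma taylor_exp_cv (y : R) : Un_cv (taylor_exp y) (exp y).
Proof.
  unfold exp; destruct (exist_exp y) as [l Hl]; simpl.
  intros eps Heps; destruct (Hl eps Heps) as [N HN]; exists N; intros m Hm.
  unfold taylor_exp; erewrite sum_eq; [exact (HN m Hm)|].
  intros i _; unfold Rdiv; ring.
Qed.

Lemma taylor_exp_tg_alt (y : R) (N : nat) :
  taylor_exp y N = sum_f_R0 (tg_alt (fun i => (-y) ^ i / INR (fact i))) N.
Proof.
  unfold taylor_exp, tg_alt; apply sum_eq; intros i _.
  replace y with ((-1) * (-y)) at 1 by ring.
  rewrite Rpow_mult_distr; unfold Rdiv; ring.
Qed.

Lemma pow_div_fact_decreasing (a : R) :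
  0 <= a <= 1 -> Un_decreasing (fun i => a ^ i / INR (fact i)).
Proof.
  intros Ha i; simpl pow; rewrite fact_simpl, mult_INR.
  pose proof (INR_fact_lt_0 i) as Hfact.
  assert (HSi : 1 <= INR (S i)) by (rewrite S_INR; pose proof (pos_INR i); lra).
  assert (Hinv : 0 < / INR (S i) <= 1).
  { split; [apply Rinv_0_lt_compat; lra|].
    rewrite <- Rinv_1; apply Rinv_le_contravar; lra. }
  assert (Hterm : 0 <= a ^ i / INR (fact i)).
  { apply Rmult_le_pos; [apply pow_le; lra|].
    left; apply Rinv_0_lt_compat; exact Hfact. }
  replace (a * a ^ i / (INR (S i) * INR (fact i)))
    with (a * / INR (S i) * (a ^ i / INR (fact i))) by (field; lra).
  assert (a * / INR (S i) <= 1) by nra.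
  nra.
Qed.

Section Alternating.

Variable y : R.
Hypothesis Hy : -1 <= y <= 0.

Let u := fun i => (-y) ^ i / INR (fact i).

Let u_decreasing : Un_decreasing u.
Proof. apply pow_div_fact_decreasing; lra. Qed.

Lemma taylor_exp_alternating_bounds (m : nat) :
  taylor_exp y (S (2 * m)) <= exp y <= taylor_exp y (2 * m).
Proof.
  rewrite !taylor_exp_tg_alt; apply alternated_series_ineq.
  - exact u_decreasing.
  - apply cv_speed_pow_fact.
  - intros eps Heps; destruct (taylor_exp_cv y eps Heps) as [N HN].
    exists N; intros m' Hm'; rewrite <- taylor_exp_tg_alt; exact (HN m' Hm').
Qed.

Lemma taylor_exp_odd_pos (m : nat) : 0 < taylor_exp y (S (2 * S m)).
Proof.
  assert (Hgrow : taylor_exp y (S (2 * S m)) >= taylor_exp y 3)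
    by (rewrite !taylor_exp_tg_alt;
        apply (growing_prop _ (S m) 1 (CV_ALT_step0 _ u_decreasing)); lia).
  enough (0 < taylor_exp y 3) by lra.
  { unfold taylor_exp; simpl.
    destruct (Req_dec y 0) as [->|Hy0]; [lra|].
    assert (0 < y * y) by nra. nra. }
Qed.

Lemma base_bounds (n : nat) :
  0 < lb_base y n /\ lb_base y n <= exp y /\ exp y <= ub_base y n.
Proof.
  unfold lb_base, ub_base.
  replace (2 * (n + 1) + 1)%nat with (S (2 * S n)) by lia.
  replace (2 * (n + 1))%nat with (2 * S n)%nat by lia.
  pose proof (taylor_exp_alternating_bounds (S n)).
  pose proof (taylor_exp_odd_pos n).
  lra.
Qed.

End Alternating.

Lemma exp_INR_mult (k : nat) (y : R) : exp (INR k * y) = exp y ^ k.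
Proof.
  induction k as [|k IHk].
  - rewrite Rmult_0_l; apply exp_0.
  - rewrite S_INR; simpl; rewrite <- IHk, <- exp_plus; f_equal; ring.
Qed.

Lemma kfl_spec (x : R) : x < -1 ->
  1 <= INR (kfl x) /\ -1 <= x / INR (kfl x) <= 0.
Proof.
  intros Hx; destruct (base_Int_part x) as [Hfloor_le Hfloor_gt].
  assert (Hneg : (Int_part x <= -1)%Z)
    by (enough (Int_part x < 0)%Z by lia; apply lt_IZR; lra).
  assert (Hk : INR (kfl x) = - IZR (Int_part x)).
  { unfold kfl; rewrite INR_IZR_INZ, Z2Nat.id by lia.
    apply opp_IZR. }
  apply IZR_le in Hneg.
  assert (Hk1 : 1 <= INR (kfl x)) by lra.
  split; [exact Hk1|].
  split.
  - apply (Rmult_le_reg_r (INR (kfl x))); [lra|].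
    unfold Rdiv; rewrite Rmult_assoc, Rinv_l by lra; lra.
  - assert (0 < / INR (kfl x)) by (apply Rinv_0_lt_compat; lra).
    unfold Rdiv; nra.
Qed.

Lemma nonpos_bounds (x : R) (n : nat) : x < 0 ->
  0 < LB_exp_nonpos x n /\ LB_exp_nonpos x n <= exp x /\
  exp x <= UB_exp_nonpos x n.
Proof.
  intros Hx; unfold LB_exp_nonpos, UB_exp_nonpos.
  destruct (Rle_dec (-1) x) as [Hx1|Hx1].
  - apply base_bounds; lra.
  - destruct (kfl_spec x ltac:(lra)) as [Hk Hy].
    destruct (base_bounds (x / INR (kfl x)) Hy n) as (Hpos & Hlb & Hub).
    replace (exp x) with (exp (x / INR (kfl x)) ^ kfl x)
      by (rewrite <- exp_INR_mult; f_equal; field; lra).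
    split; [apply pow_lt; exact Hpos|].
    split; apply pow_incr; lra.
Qed.

Theorem proposition6 (x : R) (n : nat) :
  0 < LB_exp x n /\ LB_exp x n <= exp x /\ exp x <= UB_exp x n.
Proof.
  unfold LB_exp, UB_exp.
  destruct (Req_EM_T x 0) as [->|Hx0]; [rewrite exp_0; lra|].
  destruct (Rlt_dec x 0) as [Hneg|Hneg]; [now apply nonpos_bounds|].
  destruct (nonpos_bounds (- x) n ltac:(lra)) as (Hpos & Hlb & Hub).
  replace (exp x) with (/ exp (- x)) by (rewrite exp_Ropp; apply Rinv_inv).
  pose proof (exp_pos (- x)).
  split; [apply Rinv_0_lt_compat; lra|].
  split; apply Rinv_le_contravar; lra.
Qed.
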